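(* Let $(\Omega,\mathscr H,\mathbb E)$ be a sub-linear expectation space with $\mathbb E[X]=\sup_{P\in\mathcal P}E_P[X]$ for a family $\mathcal P$ of $\sigma$-additive probability measures, and let $\nu(A)=\inf_{P\in\mathcal P}P(A)$. Let $\{Z_l\}_{l\ge1}$ be random variables in this space and $T_n:=\sum_{l=1}^n Z_l$. Suppose there are positive constants $M_0,M_1$ such that for all $n\ge1$ and all $n_1\le n_2$: (i) $\mathbb E[T_n]\le 0$; (ii) $\mathbb E[T_n^2]\le M_0\, n+(\mathbb E[T_n])^2$ (or, alternatively, $\mathbb E[T_n^2]\le M_0\, n$); (iii) $\sum_{l=n_1}^{n_2}\mathbb E[Z_l^2]\le M_1 (n_2-n_1+1)$. Then $$\nu\Big(\limsup_{n\to\infty}\frac{T_n}{n}\le 0\Big)=1.$$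
   Context: A sub-linear expectation space $(\Omega,\mathscr H,\mathbb E)$ consists of a measurable space $(\Omega,\mathcal F)$, a linear space $\mathscr H$ of real measurable functions on $\Omega$ such that $X_1,\dots,X_n\in\mathscr H$ implies $\varphi(X_1,\dots,X_n)\in\mathscr H$ for every bounded Lipschitz $\varphi:\mathbb R^n\to\mathbb R$, and a functional $\mathbb E:\mathscr H\to\mathbb R$ that is monotone ($X\ge Y\Rightarrow \mathbb E[X]\ge\mathbb E[Y]$), constant preserving ($\mathbb E[c]=c$), sub-additive ($\mathbb E[X+Y]\le\mathbb E[X]+\mathbb E[Y]$) and positively homogeneous ($\mathbb E[\lambda X]=\lambda\mathbb E[X]$ for $\lambda\ge0$). It is assumed that $\mathbb E[X]=\sup_{P\in\mathcal P}E_P[X]$, where $E_P$ is expectation under $P$; this formula is used to evaluate $\mathbb E$ on all random variables appearing (e.g. $Z_l^2$, $T_n^2$). The upper probability is $\mathbb V(A)=\sup_{P\in\mathcal P}P(A)$ and the lower probability is $\nu(A)=\inf_{P\in\mathcal P}P(A)$ for $A\in\mathcal F$. *)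

From HB Require Import structures.
From mathcomp Require Import all_boot all_order all_algebra.
From mathcomp Require Import all_classical all_reals all_analysis.
Set Implicit Arguments. Unset Strict Implicit. Unset Printing Implicit Defensive.
Import Order.TTheory GRing.Theory Num.Theory.
Local Open Scope classical_set_scope.
Local Open Scope ring_scope.

Definition upperE d (T : measurableType d) (R : realType)
  (Pfam : set (probability T R)) (X : T -> R) : \bar R :=
  ereal_sup [set (\int[P]_x (X x)%:E)%E | P in Pfam].

Definition lowerP d (T : measurableType d) (R : realType)
  (Pfam : set (probability T R)) (A : set T) : \bar R :=
  ereal_inf [set P A | P in Pfam].

Definition psum (T : Type) (R : realType) (Z : nat -> T -> R) (n : nat) : T -> R :=
  fun w => \sum_(1 <= l < n.+1) Z l w.

From HB Require Import structures.
From mathcomp Require Import all_boot all_order all_algebra.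
From mathcomp Require Import all_classical all_reals all_analysis.
From mathcomp Require Import ring lra zify.
Import Order.TTheory GRing.Theory Num.Theory.
Import measurable_realfun.
Set Implicit Arguments.
Unset Strict Implicit.
Unset Printing Implicit Defensive.
Local Open Scope classical_set_scope.
Local Open Scope ring_scope.

(* Fix a measure P of the family.  Since E_P[T_n] <= E[T_n] <= 0, hypothesis
   (ii) bounds the P-variance of T_n by M0 n (a more negative mean only helps),
   and (iii) with n1 = n2 bounds E_P[Z_l^2] by M1.  Along the squares
   N_k = (k+1)^2 the nonnegative variables
     (T_{N_k} - E_P T_{N_k})^2 / ((k+1)^3 (k+2))
       + (sum_{N_k < l <= N_{k+1}} Z_l^2) / ((k+1)^2 (k+2))
   have P-expectations at most (M0 + 3 M1) / ((k+1)(k+2)), which is summable,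
   so they tend to 0 P-almost surely.  On that event, for N_k <= n < N_{k+1},
   the centred part of T_{N_k} and (by Cauchy-Schwarz) the block
   sum_{N_k < l <= n} Z_l are both o(k^2) = o(n), while E_P T_{N_k} <= 0.
   Hence limsup T_n / n <= 0 P-a.s. for every P, i.e. with lower probability 1. *)

Section deterministic.
Variable R : realType.

Lemma sqrD_le_mulD (s x q n : R) : 0 <= n -> 0 <= q ->
  s ^+ 2 <= n * q -> (s + x) ^+ 2 <= (n + 1) * (q + x ^+ 2).
Proof.
move=> n0 q0; have [->|nz] := eqVneq n 0.
  rewrite mul0r => s2; have -> : s = 0 by apply/eqP; rewrite -sqrf_eq0 eq_le s2 sqr_ge0.
  by rewrite add0r add0r mul1r lerDr.
have np : 0 < n by rewrite lt_neqAle eq_sym nz.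
move=> s2; rewrite -subr_ge0 -(pmulr_rge0 _ np).
(* [n ((n+1)(q+x^2) - (s+x)^2) >= (s - n x)^2] once [s^2 <= n q]. *)
have := sqr_ge0 (s - n * x); nra.
Qed.

Lemma sqr_sum_le (a : nat -> R) (i j : nat) : (i <= j)%N ->
  (\sum_(i <= l < j) a l) ^+ 2 <= (j - i)%:R * \sum_(i <= l < j) a l ^+ 2.
Proof.
move=> /subnKC <-; rewrite addKn; elim: (j - i)%N => [|n IH].
  by rewrite addn0 big_geq // expr0n mul0r.
rewrite addnS !big_nat_recr ?leq_addr //= -natr1.
apply: sqrD_le_mulD IH => //.
by apply: sumr_ge0 => l _; exact: sqr_ge0.
Qed.

Lemma nat_sqr_bracket (n : nat) : (1 <= n)%N ->
  exists k, (k.+1 * k.+1 <= n < k.+2 * k.+2)%N.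
Proof.
elim: n => [//|n IH] _.
have [->|n_gt0] := eqVneq n 0%N; first by exists 0%N.
have [k /andP[lb ub]] : exists k, (k.+1 * k.+1 <= n < k.+2 * k.+2)%N.
  by apply: IH; rewrite lt0n.
have [ub'|ub'] := ltnP n.+1 (k.+2 * k.+2); first by exists k; lia.
by exists k.+1; lia.
Qed.

Lemma limn_esup_le (u : (\bar R)^nat) (l : \bar R) (N : nat) :
  (forall n, (N <= n)%N -> (u n <= l)%E) -> (limn_esup u <= l)%E.
Proof.
move=> ul; apply: (le_trans (ereal_inf_lbound _)).
  by exists [set n | (N <= n)%N]; [exists N | reflexivity].
by apply: ub_ereal_sup => _ [n Nn <-]; exact: ul.
Qed.

Lemma avg_le_of_block_bounds (z : nat -> R) (mN c : R) (k n : nat) :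
  (k.+1 * k.+1 <= n < k.+2 * k.+2)%N -> 0 < c -> mN <= 0 ->
  ((\sum_(1 <= l < (k.+1 * k.+1).+1) z l) - mN) ^+ 2
    <= c ^+ 2 / 6 * (k.+1%:R ^+ 3 * k.+2%:R) ->
  \sum_((k.+1 * k.+1).+1 <= l < (k.+2 * k.+2).+1) z l ^+ 2
    <= c ^+ 2 / 6 * (k.+1%:R ^+ 2 * k.+2%:R) ->
  \sum_(1 <= l < n.+1) z l <= (c + c) * n%:R.
Proof.
(* With r = k+1 and r + 1 <= 2r, both right-hand sides are at most (c r^2)^2,
   the second after multiplying by the block length n - N <= 3r. *)
move=> /andP[lbn ubn] c0 mN0 headB blockB.
set N := (k.+1 * k.+1)%N in lbn headB blockB.
pose r : R := k.+1%:R.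
have r1 : 1 <= r by rewrite ler1n.
have k2 : k.+2%:R = r + 1 :> R by rewrite -natr1.
rewrite k2 -/r in headB blockB.
have rn : r * r <= n%:R by rewrite -natrM ler_nat.
have cr2_ge0 : 0 <= c * (r * r) by nra.
have le_of_sqr x : x ^+ 2 <= (c * (r * r)) ^+ 2 -> x <= c * (r * r) by nra.
rewrite (big_cat_nat _ (n := N.+1)) //=.
have head_le : \sum_(1 <= l < N.+1) z l - mN <= c * (r * r).
  by apply/le_of_sqr; apply: (le_trans headB); nra.
have block_le : \sum_(N.+1 <= l < n.+1) z l <= c * (r * r).
  have Q0 : 0 <= \sum_(N.+1 <= l < n.+1) z l ^+ 2.
    by apply: sumr_ge0 => l _; exact: sqr_ge0.
  have Qle : \sum_(N.+1 <= l < n.+1) z l ^+ 2 <= c ^+ 2 / 6 * (r ^+ 2 * (r + 1)).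
    apply: le_trans blockB; rewrite [leRHS](big_cat_nat _ (n := n.+1)) //=; last lia.
    by rewrite lerDl; apply: sumr_ge0 => l _; exact: sqr_ge0.
  have len : (n.+1 - N.+1)%:R <= 3 * r :> R.
    by rewrite subSS /r -natrM ler_nat /N; lia.
  have NSn : (N.+1 <= n.+1)%N by rewrite ltnS.
  apply/le_of_sqr/(le_trans (sqr_sum_le z NSn)).
  apply: (le_trans (ler_wpM2r Q0 len)).
  apply: (le_trans (ler_wpM2l _ Qle)); nra.
nra.
Qed.

Lemma limn_esup_avg_le0 (z m g : nat -> R) :
  (forall k, m (k.+1 * k.+1)%N <= 0) -> g @ \oo --> 0 ->
  (forall k, ((\sum_(1 <= l < (k.+1 * k.+1).+1) z l) - m (k.+1 * k.+1)%N) ^+ 2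
       <= g k * (k.+1%:R ^+ 3 * k.+2%:R)) ->
  (forall k, \sum_((k.+1 * k.+1).+1 <= l < (k.+2 * k.+2).+1) z l ^+ 2
       <= g k * (k.+1%:R ^+ 2 * k.+2%:R)) ->
  (limn_esup (fun n => ((\sum_(1 <= l < n.+1) z l) / n%:R)%:E) <= 0)%E.
Proof.
move=> m_le0 g0 headB blockB; apply/lee_addgt0Pr => e e0; rewrite add0e.
pose c := e / 2; have c0 : 0 < c by rewrite divr_gt0.
have d0 : 0 < c ^+ 2 / 6 by rewrite divr_gt0 // exprn_gt0.
have [K _ gK] := (cvgrPdist_lt _ _).1 g0 _ d0.
apply: (@limn_esup_le _ _ (K.+1 * K.+1)%N) => n Kn.
have [k kn] : exists k, (k.+1 * k.+1 <= n < k.+2 * k.+2)%N by apply: nat_sqr_bracket; nia.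
have gk : g k <= c ^+ 2 / 6.
  have Kk : (K <= k)%N by nia.
  have := gK k Kk; rewrite /= sub0r normrN => /ltW; exact: le_trans (ler_norm _).
have n0 : 0 < n%:R :> R by rewrite ltr0n; nia.
rewrite lee_fin ler_pdivrMr // (splitr e) -/c.
apply: avg_le_of_block_bounds kn c0 (m_le0 k) _ _.
- by apply: (le_trans (headB k)); rewrite ler_wpM2r // mulr_ge0 // exprn_ge0.
- by apply: (le_trans (blockB k)); rewrite ler_wpM2r // mulr_ge0 // exprn_ge0.
Qed.

Lemma sum_div_mulSS (c : R) (n : nat) :
  \sum_(0 <= k < n) c / (k.+1%:R * k.+2%:R) = c - c / n.+1%:R.
Proof.
elim: n => [|n IH]; first by rewrite big_nil divr1 subrr.
rewrite big_nat_recr //= IH -[n.+2%:R]natr1.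
have n1_gt0 : 0 < n.+1%:R :> R by rewrite ltr0n.
by field; rewrite !gt_eqF // ?ltr_wpDl.
Qed.

Lemma nneseries_div_mulSS_le (c : R) : 0 <= c ->
  (\sum_(k <oo) (c / (k.+1%:R * k.+2%:R))%:E <= c%:E)%E.
Proof.
move=> c0; apply: lime_le.
  by apply: is_cvg_nneseries => k _ _; rewrite lee_fin divr_ge0.
apply: nearW => n; rewrite sumEFin lee_fin sum_div_mulSS lerBlDr lerDl.
by rewrite divr_ge0.
Qed.

Lemma nneseries_fin_num_cvg0 (g : nat -> R) : (forall k, 0 <= g k) ->
  (\sum_(k <oo) (g k)%:E)%E \is a fin_num -> g @ \oo --> 0.
Proof.
move=> g0 g_fin; apply: cvg_series_cvg_0; apply: nondecreasing_is_cvgn.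
  move=> a b ab; rewrite /series /= [leRHS](big_cat_nat _ (n := a)) //= lerDl.
  by apply: sumr_ge0 => i _; exact: g0.
exists (fine (\sum_(k <oo) (g k)%:E)%E) => _ [n _ <-].
rewrite -lee_fin fineK // /series /= -sumEFin.
by apply: nneseries_lim_ge => i _ _; rewrite lee_fin.
Qed.

End deterministic.

Section integrals.
Context d (T : measurableType d) (R : realType).

Lemma integrable_sqr (mu : {measure set T -> \bar R}) (f : T -> R) :
  measurable_fun setT f -> (\int[mu]_x (f x ^+ 2)%:E < +oo)%E ->
  mu.-integrable setT (EFin \o (fun x => f x ^+ 2)).
Proof.
move=> mf f2_fin; apply/integrableP; split.
  by apply/measurable_EFinP; exact: measurable_funX.
by under eq_integral => x _ do rewrite /comp abse_EFin (ger0_norm (sqr_ge0 _)).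
Qed.

Lemma integrable_of_integrable_sqr (mu : {finite_measure set T -> \bar R})
    (f : T -> R) : measurable_fun setT f ->
  mu.-integrable setT (EFin \o (fun x => f x ^+ 2)) -> mu.-integrable setT (EFin \o f).
Proof.
move=> mf f2_int.
apply: (@le_integrable _ _ _ mu setT _ _ (EFin \o (fun x => 1 + f x ^+ 2))) => //.
- exact/measurable_EFinP.
- move=> x _; rewrite /comp !abse_EFin lee_fin [`|1 + _|]ger0_norm ?addr_ge0 ?sqr_ge0 //.
  rewrite -[f x ^+ 2]real_normK ?num_real //.
  by have := sqr_ge0 (`|f x| - 1); have := normr_ge0 (f x); nra.
- have -> : EFin \o (fun x => 1 + f x ^+ 2) =
            (EFin \o cst 1) \+ (EFin \o (fun x => f x ^+ 2)).
    by apply/funext => x /=; rewrite EFinD.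
  exact: integrableD (finite_measure_integrable_cst _ _ _) f2_int.
Qed.

Lemma integral_sqr_sub_mean (P : probability T R) (f : T -> R) (m : R) :
  P.-integrable setT (EFin \o f) -> P.-integrable setT (EFin \o (fun x => f x ^+ 2)) ->
  (\int[P]_x (f x)%:E = m%:E)%E ->
  (\int[P]_x ((f x - m) ^+ 2)%:E = \int[P]_x (f x ^+ 2)%:E - (m ^+ 2)%:E)%E.
Proof.
move=> f_int f2_int fm.
have lin_int : P.-integrable setT (fun x => (- 2 * m)%:E * (f x)%:E + (m ^+ 2)%:E)%E.
  exact: integrableD (integrableZl _ _ f_int) (finite_measure_integrable_cst _ _ _).
rewrite (eq_integral
    (fun x => (f x ^+ 2)%:E + ((- 2 * m)%:E * (f x)%:E + (m ^+ 2)%:E))%E);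
  last by move=> x _; rewrite -EFinM -!EFinD; congr EFin; ring.
rewrite integralD // integralD //; last 2 first.
- exact: integrableZl.
- exact: finite_measure_integrable_cst.
have PT : ((P : measure T R) setT = 1)%E by exact: probability_setT.
rewrite integralZl // fm (integral_cst P measurableT) PT mule1.
have := integrable_fin_num measurableT f2_int.
by rewrite -EFinM -EFinD => /fineK <-; rewrite -EFinD -EFinB; congr EFin; ring.
Qed.

Lemma integral_sqr_sub_mean_le (P : probability T R) (f : T -> R) (m a : R)
    (U : \bar R) :
  measurable_fun setT f -> P.-integrable setT (EFin \o f) ->
  (\int[P]_x (f x)%:E = m%:E)%E -> (m%:E <= U)%E -> (U <= 0)%E ->
  (\int[P]_x (f x ^+ 2)%:E <= a%:E + U * U)%E ->
  (\int[P]_x ((f x - m) ^+ 2)%:E <= a%:E)%E.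
Proof.
case: U => [u| |] // mf f_int fm; rewrite !lee_fin => mu_le u0.
rewrite -EFinM -EFinD => f2_le.
have f2_int := integrable_sqr mf (le_lt_trans f2_le (ltry _)).
rewrite (integral_sqr_sub_mean f_int f2_int fm).
move: f2_le; rewrite -(fineK (integrable_fin_num measurableT f2_int)) -EFinB !lee_fin.
nra.
Qed.

Lemma ge0_le_integral_scaleD (mu : {measure set T -> \bar R}) (g h : T -> R)
    (a b s t : R) :
  measurable_fun setT g -> measurable_fun setT h ->
  (forall x, 0 <= g x) -> (forall x, 0 <= h x) -> 0 <= s -> 0 <= t ->
  (\int[mu]_x (g x)%:E <= a%:E)%E -> (\int[mu]_x (h x)%:E <= b%:E)%E ->
  (\int[mu]_x (s * g x + t * h x)%:E <= (s * a + t * b)%:E)%E.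
Proof.
move=> mg mh g0 h0 s0 t0 ga hb.
under eq_integral => x _ do rewrite EFinD !EFinM.
rewrite ge0_integralD //; last 4 first.
- by move=> x _; rewrite -EFinM lee_fin mulr_ge0.
- by apply: measurable_funeM; apply/measurable_EFinP.
- by move=> x _; rewrite -EFinM lee_fin mulr_ge0.
- by apply: measurable_funeM; apply/measurable_EFinP.
rewrite !ge0_integralZl //; last 4 first.
- exact/measurable_EFinP.
- by move=> x _; rewrite lee_fin.
- exact/measurable_EFinP.
- by move=> x _; rewrite lee_fin.
rewrite EFinD !EFinM.
by apply: leeD; apply: lee_wpmul2l; rewrite ?lee_fin.
Qed.

Lemma ae_cvg0_of_summable (mu : {measure set T -> \bar R}) (f : nat -> T -> R) :
  (forall k, measurable_fun setT (f k)) -> (forall k x, 0 <= f k x) ->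
  (\sum_(k <oo) \int[mu]_x (f k x)%:E < +oo)%E ->
  {ae mu, forall x, f ^~ x @ \oo --> 0}.
Proof.
move=> mf f0 sum_fin.
pose V x := (\sum_(k <oo) (f k x)%:E)%E.
have V0 x : (0 <= V x)%E by apply: nneseries_ge0 => k _ _; rewrite lee_fin.
have V_int : mu.-integrable setT V.
  apply/integrableP; split.
    apply: (@ge0_emeasurable_sum _ _ _ setT (fun k x => (f k x)%:E) xpredT).
      by move=> k x _ _; rewrite lee_fin.
    by move=> k _; exact/measurable_EFinP.
  under eq_integral => x _ do rewrite (gee0_abs (V0 x)).
  rewrite integral_nneseries // => [k|k x _]; [exact/measurable_EFinP|by rewrite lee_fin].
apply: filterS (integrable_ae measurableT V_int) => x /(_ I).
exact: nneseries_fin_num_cvg0.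
Qed.

Lemma probability_ae_eq1 (P : probability T R) (A : set T) :
  measurable A -> {ae P, forall x, A x} -> P A = 1%E.
Proof.
move=> mA [N [mN PN0 AN]].
have PAC0 : P (~` A) = 0%E.
  apply/eqP; rewrite eq_le measure_ge0 andbT -PN0.
  by rewrite le_measure ?inE //; exact: measurableC.
move: PAC0; rewrite probability_setC //.
have : P A \is a fin_num by exact: fin_num_measure.
by case: (P A) => // r _ /eqP; rewrite -EFinB eqe subr_eq0 => /eqP <-.
Qed.

Lemma measurable_limn_esup_le (u : nat -> T -> \bar R) (a : \bar R) :
  (forall n, measurable_fun setT (u n)) ->
  measurable [set x | (limn_esup (u ^~ x) <= a)%E].
Proof.
move=> mu; rewrite -[X in measurable X]setTI.
have -> : [set x | (limn_esup (u ^~ x) <= a)%E] =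
          (fun x => limn_esup (u ^~ x)) @^-1` [set` `]-oo, a]].
  by apply/seteqP; split => x /=; rewrite in_itv.
exact: measurable_fun_limn_esup mu measurableT _ (emeasurable_itv _).
Qed.

End integrals.

Section one_probability.
Context d (T : measurableType d) (R : realType) (P : probability T R).
Variables (Z : nat -> T -> R) (M0 M1 : R).
Hypothesis mZ : forall l, measurable_fun setT (Z l).
Hypothesis Z2_le : forall l, (1 <= l)%N -> (\int[P]_x (Z l x ^+ 2)%:E <= M1%:E)%E.

Lemma measurable_psum n : measurable_fun setT (psum Z n).
Proof. exact: measurable_sum. Qed.

Lemma integrable_psum n : P.-integrable setT (EFin \o psum Z n).
Proof.
have Z_int l : (1 <= l)%N -> P.-integrable setT (EFin \o Z l).
  move=> l1; apply: integrable_of_integrable_sqr (mZ l) _.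
  exact: integrable_sqr (mZ l) (le_lt_trans (Z2_le l1) (ltry _)).
elim: n => [|n IH].
  have -> : EFin \o psum Z 0 = EFin \o cst 0.
    by apply/funext => x; rewrite /psum /= big_geq.
  exact: finite_measure_integrable_cst.
have -> : EFin \o psum Z n.+1 = (EFin \o psum Z n) \+ (EFin \o Z n.+1).
  by apply/funext => x; rewrite /psum /= big_nat_recr //= EFinD.
exact: integrableD IH (Z_int _ _).
Qed.

Definition psum_mean n := fine (\int[P]_x (psum Z n x)%:E).

Lemma integral_psum n : (\int[P]_x (psum Z n x)%:E = (psum_mean n)%:E)%E.
Proof.
by rewrite fineK //; have := integrable_fin_num measurableT (integrable_psum n); apply.
Qed.

Lemma integral_sqr_psum_sub_mean_le n (U : \bar R) (a : R) :
  (\int[P]_x (psum Z n x)%:E <= U)%E -> (U <= 0)%E ->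
  (\int[P]_x (psum Z n x ^+ 2)%:E <= a%:E + U * U)%E ->
  (\int[P]_x ((psum Z n x - psum_mean n) ^+ 2)%:E <= a%:E)%E.
Proof.
rewrite integral_psum; apply: integral_sqr_sub_mean_le (integral_psum n).
- exact: measurable_psum.
- exact: integrable_psum.
Qed.

Lemma integral_sum_sqr_le n1 n2 : (1 <= n1)%N ->
  (\int[P]_x (\sum_(n1 <= l < n2) Z l x ^+ 2)%:E <= ((n2 - n1)%:R * M1)%:E)%E.
Proof.
move=> n1_ge1; under eq_integral do rewrite -sumEFin.
rewrite ge0_integral_sum //; last 2 first.
- by move=> l; apply/measurable_EFinP; exact: measurable_funX.
- by move=> l x _; rewrite lee_fin sqr_ge0.
rewrite mulr_natl -sumr_const_nat -sumEFin big_nat_cond [leRHS]big_nat_cond.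
by apply: lee_sum => l /andP[/andP[n1l _] _]; exact/Z2_le/(leq_trans n1_ge1).
Qed.

(* The weights are those making the expectation of each term, at most
   M0 (k+1)^2 resp. 3 (k+1) M1, of order 1/((k+1)(k+2)). *)
Definition block_ctrl k w : R :=
  (k.+1%:R ^+ 3 * k.+2%:R)^-1 * (psum Z (k.+1 * k.+1) w - psum_mean (k.+1 * k.+1)) ^+ 2
  + (k.+1%:R ^+ 2 * k.+2%:R)^-1 *
    \sum_((k.+1 * k.+1).+1 <= l < (k.+2 * k.+2).+1) Z l w ^+ 2.

Lemma block_ctrl_ge0 k w : 0 <= block_ctrl k w.
Proof.
rewrite addr_ge0 // mulr_ge0 ?sqr_ge0 // ?invr_ge0 ?mulr_ge0 ?exprn_ge0 //.
by apply: sumr_ge0 => l _; exact: sqr_ge0.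
Qed.

Lemma measurable_block_ctrl k : measurable_fun setT (block_ctrl k).
Proof.
apply: measurable_funD; apply: measurable_funM => //.
  by apply: measurable_funX; apply: measurable_funB => //; exact: measurable_psum.
by apply: measurable_sum => l; exact: measurable_funX.
Qed.

Hypothesis M0_ge0 : 0 <= M0.
Hypothesis M1_ge0 : 0 <= M1.
Hypothesis var_le : forall n, (1 <= n)%N ->
  (\int[P]_x ((psum Z n x - psum_mean n) ^+ 2)%:E <= (M0 * n%:R)%:E)%E.

Lemma integral_block_ctrl_le k :
  (\int[P]_x (block_ctrl k x)%:E <= ((M0 + 3 * M1) / (k.+1%:R * k.+2%:R))%:E)%E.
Proof.
have N1 : (1 <= (k.+1 * k.+1))%N by rewrite muln_gt0.
apply: le_trans (ge0_le_integral_scaleD _ _ _ _ _ _ (var_le N1)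
  (integral_sum_sqr_le _ (leq_trans N1 (leqnSn _)))) _.
- by apply: measurable_funX; apply: measurable_funB => //; exact: measurable_psum.
- by apply: measurable_sum => l; exact: measurable_funX.
- by move=> x; exact: sqr_ge0.
- by move=> x; apply: sumr_ge0 => l _; exact: sqr_ge0.
- by rewrite invr_ge0.
- by rewrite invr_ge0.
have cnt : ((k.+2 * k.+2).+1 - (k.+1 * k.+1).+1)%:R <= 3 * k.+1%:R :> R.
  by rewrite -natrM ler_nat; lia.
rewrite lee_fin natrM -[k.+2%:R]natr1.
set r := k.+1%:R; have r_gt0 : 0 < r by rewrite ltr0n.
rewrite [leRHS](_ : _ = (r ^+ 3 * (r + 1))^-1 * (M0 * (r * r))
                      + (r ^+ 2 * (r + 1))^-1 * (3 * r * M1)); last first.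
  by field; rewrite !gt_eqF // ltr_wpDl.
rewrite lerD2l ler_wpM2l ?invr_ge0 ?ler_wpM2r //.
by rewrite mulr_ge0 // ?exprn_ge0 ?addr_ge0 // ltW.
Qed.

Hypothesis mean_le0 : forall n, (1 <= n)%N -> psum_mean n <= 0.

Lemma psum_avg_limsup_le0_ae :
  P [set w | (limn_esup (fun n => (psum Z n w / n%:R)%:E) <= 0)%E] = 1%E.
Proof.
apply: probability_ae_eq1.
  apply: measurable_limn_esup_le => n; apply/measurable_EFinP.
  by apply: measurable_funM => //; exact: measurable_psum.
have summable : (\sum_(k <oo) \int[P]_x (block_ctrl k x)%:E < +oo)%E.
  apply: le_lt_trans (ltry (M0 + 3 * M1)).
  apply: le_trans (nneseries_div_mulSS_le _); last by rewrite addr_ge0 ?mulr_ge0.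
  apply: lee_nneseries => [k _ _|k _]; last exact: integral_block_ctrl_le.
  by apply: integral_ge0 => x _; rewrite lee_fin block_ctrl_ge0.
apply: filterS (ae_cvg0_of_summable measurable_block_ctrl block_ctrl_ge0 summable).
move=> w ctrl_cvg0; apply: (@limn_esup_avg_le0 _ _ psum_mean _ _ ctrl_cvg0) => k.
- by apply: mean_le0; rewrite muln_gt0.
- rewrite -ler_pdivrMr ?mulr_gt0 ?exprn_gt0 // mulrC /block_ctrl lerDl.
  by rewrite mulr_ge0 ?invr_ge0 ?sumr_ge0 // => l _; exact: sqr_ge0.
- rewrite -ler_pdivrMr ?mulr_gt0 ?exprn_gt0 // mulrC /block_ctrl lerDr.
  by rewrite mulr_ge0 ?invr_ge0 ?sqr_ge0.
Qed.

End one_probability.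

Section upper_lower.
Context d (T : measurableType d) (R : realType) (Pfam : set (probability T R)).

Lemma integral_le_upperE (P : probability T R) (X : T -> R) :
  Pfam P -> (\int[P]_x (X x)%:E <= upperE Pfam X)%E.
Proof. by move=> PP; apply: ereal_sup_ubound; exists P. Qed.

Lemma lowerP_eq1 (A : set T) :
  Pfam !=set0 -> (forall P, Pfam P -> P A = 1%E) -> lowerP Pfam A = 1%E.
Proof.
move=> [P0 PP0] PA1; rewrite /lowerP (_ : [set P A | P in Pfam] = [set 1%E]).
  exact: ereal_inf1.
apply/seteqP; split => x /=; first by move=> [P PP <-]; exact: PA1.
by move=> ->; exists P0 => //; exact: PA1.
Qed.

End upper_lower.

Theorem theorem3p1 (d : measure_display) (T : measurableType d) (R : realType)
  (Pfam : set (probability T R)) (Z : nat -> T -> R) (M0 M1 : R) :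
  Pfam !=set0 ->
  (forall l, measurable_fun setT (Z l)) ->
  0 < M0 -> 0 < M1 ->
  (forall n, (1 <= n)%N -> (upperE Pfam (psum Z n) <= 0)%E) ->
  (forall n, (1 <= n)%N ->
     (upperE Pfam (fun w => (psum Z n w ^+ 2)%R)
       <= (M0 * n%:R)%R%:E + upperE Pfam (psum Z n) * upperE Pfam (psum Z n))%E) ->
  (forall n1 n2, (1 <= n1)%N -> (n1 <= n2)%N ->
     (\sum_(n1 <= l < n2.+1) upperE Pfam (fun w => (Z l w ^+ 2)%R)
       <= (M1 * (n2 - n1 + 1)%:R)%R%:E)%E) ->
  lowerP Pfam [set w | (limn_esup (fun n => (psum Z n w / n%:R)%R%:E) <= 0)%E] = 1%E.
Proof.
move=> Pfam0 mZ M0_gt0 M1_gt0 mean_le0 sqr_le Z2_le.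
refine (lowerP_eq1 Pfam0 _) => P PP.
have Z2_leP l : (1 <= l)%N -> (\int[P]_x (Z l x ^+ 2)%:E <= M1%:E)%E.
  move=> l1; have := Z2_le l l l1 (leqnn l).
  by rewrite big_nat1 subnn add0n mulr1; apply: le_trans; exact: integral_le_upperE.
have meanP_le n : (\int[P]_x (psum Z n x)%:E <= upperE Pfam (psum Z n))%E.
  exact: integral_le_upperE.
apply: (psum_avg_limsup_le0_ae mZ Z2_leP (ltW M0_gt0) (ltW M1_gt0)) => n n1.
- apply: (integral_sqr_psum_sub_mean_le mZ Z2_leP (meanP_le n) (mean_le0 n n1)).
  by apply: le_trans (sqr_le n n1); exact: integral_le_upperE.
- by rewrite -lee_fin -(integral_psum mZ Z2_leP); exact: le_trans (mean_le0 n n1).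
Qed.
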